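(* Fix an integer $d\ge1$ and let $S_d=\langle a_0,\dots,a_d,s\mid s a_0 s^{-1}a_0^{-1},\ a_{i+1}a_ia_{i+1}^{-1}a_0^{-1}\ (0\le i<d)\rangle$. For $0\le i<j\le d$ and $n\ge1$ let $f_{i,j}(n)=\tfrac12\,\bigl|\mathrm{vrim}(\mathrm{Fan}(a_i^n,a_j^n))\bigr|$, and set $f_{i,i}(n)=0$ for all $n$ and $f_{i,j}(0)=0$ for all $i\le j$. Then for all $n\ge1$ and $0\le i<j\le d$, \[ f_{i,j}(n)=f_{i,j-1}(n)+f_{0,j}(n-1)+1 .\]
   Context: Each relator of $S_d$ has the form $\lambda p\lambda^{-1}q^{-1}$ with $(\lambda,p,q)=(s,a_0,a_0)$ or $(a_{i+1},a_i,a_0)$. In the unit square of such a relator in the presentation complex, reading from a corner $B$: $\lambda$ goes from $B$ to $Q$, $p$ from $Q$ to the top corner $T$, $\lambda$ from $R$ to $T$, $q$ from $B$ to $R$; the edges $p,\lambda$ into $T$ are the top edges. The descending link is the graph on the generators in which $u,v$ are adjacent iff some relator square has top edges labeled $u$ and $v$; for $S_d$ it is the path $s - a_0 - a_1 - \cdots - a_d$, and each adjacent pair corresponds to a unique relator. For a relator $e$ put $x_e=q^{-1}\lambda$. Simple fans: $\mathrm{Fan}(a,a)$ is a single edge labeled $a$ (apex at its end), empty rims. For distinct generators $a,b$, let $a=v_0,\dots,v_k=b$ be the path in the descending link, take copies $C_i$ of the relator square with top edges $v_{i-1},v_i$, and glue the top edge $v_i$ of $C_i$ to that of $C_{i+1}$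 ($1\le i<k$); the common top corner is the apex. The vertex rim is the concatenation of the two-letter words read along the bottom of $C_i$ from the initial vertex of its top edge $v_{i-1}$ to the initial vertex of its top edge $v_i$ (each is $q^{-1}\lambda$ or $\lambda^{-1}q$), so it has the form $a_1^{-1}b_1\cdots a_k^{-1}b_k$; the edge rim replaces $q^{-1}\lambda$ by $x_e$ and $\lambda^{-1}q$ by $x_e^{-1}$. Fans of height $n\ge2$: for positive words $u=au'$, $v=bv'$ of length $n$ with $a,b$ generators, let $F'=\mathrm{Fan}(u',v')$ with vertex rim $a_1^{-1}b_1\cdots a_k^{-1}b_k$, put $b_0=a$, $a_{k+1}=b$, and attach for $i=1,\dots,k+1$ the simple fan $\mathrm{Fan}(b_{i-1},a_i)$ with apex at the rim vertex where the edges $b_{i-1}$ and $a_i$ terminate (for $i=1$, the initial vertex of the side $u'$, the new edge $a$ extending that side; symmetrically for $i=k+1$), identifying its top edges with the corresponding edges. This is $\mathrm{Fan}(u,v)$; its vertex and edge rims are the concatenations of those of the attached simple fans. $|w|$ is the length of a word $w$. *)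

From HB Require Import structures.
From mathcomp Require Import all_boot.
Set Implicit Arguments. Unset Strict Implicit. Unset Printing Implicit Defensive.

(* Generators of S_d : s and a_0, ..., a_d (a_i is [ga i]). *)
Inductive gen := gs | ga of nat.

Definition gen_code (g : gen) : option nat :=
  match g with gs => None | ga i => Some i end.
Definition gen_decode (o : option nat) : gen :=
  match o with None => gs | Some i => ga i end.
Lemma gen_codeK : cancel gen_code gen_decode. Proof. by case. Qed.
HB.instance Definition _ := Equality.copy gen (can_type gen_codeK).

(* A letter of a word: a generator with an inversion flag (true = inverse). *)
Definition letter := (gen * bool)%type.

(* Relators of S_d, each λ p λ^{-1} q^{-1}, recorded as triples (λ, p, q):
   (s, a_0, a_0) and (a_{i+1}, a_i, a_0) for 0 <= i < d. *)
Definition relators (d : nat) : seq (gen * gen * gen) :=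
  (gs, ga 0, ga 0) :: [seq (ga i.+1, ga i, ga 0) | i <- iota 0 d].

Definition relator_word (r : gen * gen * gen) : seq letter :=
  let: (l, p, q) := r in [:: (l, false); (p, false); (l, true); (q, true)].

(* The descending link of S_d: the path s - a_0 - a_1 - ... - a_d. *)
Definition dlink_path (d : nat) : seq gen := gs :: [seq ga i | i <- iota 0 d.+1].

(* The (unique) path in the descending link from a to b, as a vertex list
   a = v_0, ..., v_k = b. *)
Definition link_path (d : nat) (a b : gen) : seq gen :=
  let P := dlink_path d in
  let ia := index a P in let ib := index b P in
  if ia <= ib then take (ib - ia).+1 (drop ia P)
  else rev (take (ia - ib).+1 (drop ib P)).

(* The relator whose square has top edges labelled u and v (i.e. {p, λ} = {u, v}). *)
Definition top_relator (d : nat) (u v : gen) : option (gen * gen * gen) :=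
  ohead [seq r <- relators d |
         ((r.1.1 == u) && (r.1.2 == v)) || ((r.1.1 == v) && (r.1.2 == u))].

(* The two-letter word read along the bottom of the square C with top edges
   u, v, from the initial vertex of the top edge u to that of the top edge v:
   from Q (start of p) to R (start of λ) it is λ^{-1} q, from R to Q it is q^{-1} λ. *)
Definition bottom_word (d : nat) (u v : gen) : seq letter :=
  match top_relator d u v with
  | Some (l, p, q) =>
      if u == p then [:: (l, true); (q, false)] else [:: (q, true); (l, false)]
  | None => [::]
  end.

(* Vertex rim of the simple fan Fan(a, b) (empty when a = b). *)
Definition simple_vrim (d : nat) (a b : gen) : seq letter :=
  let P := link_path d a b in
  flatten [seq bottom_word d x.1 x.2 | x <- zip P (behead P)].

Fixpoint pairup (T : Type) (s : seq T) : seq (T * T) :=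
  match s with x :: y :: t => (x, y) :: pairup t | _ => [::] end.

(* Vertex rim of Fan(u, v) for positive words u, v of the same length n >= 1.
   For n >= 2, with u = a u', v = b v' and vertex rim a_1^{-1} b_1 ... a_k^{-1} b_k
   of Fan(u', v'), it is the concatenation of the vertex rims of the simple fans
   Fan(b_{i-1}, a_i), i = 1..k+1, with b_0 = a, a_{k+1} = b. *)
Fixpoint vrim (d : nat) (u v : seq gen) : seq letter :=
  match u, v with
  | a :: u', b :: v' =>
      if u' is [::] then simple_vrim d a b
      else let w := vrim d u' v' in
           let pts := a :: rcons (map fst w) b in
           flatten [seq simple_vrim d x.1 x.2 | x <- pairup pts]
  | _, _ => [::]
  end.

(* f_{i,j}(n) = |vrim(Fan(a_i^n, a_j^n))| / 2 for i < j, n >= 1, and 0 when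
   i = j or n = 0. (The vertex rim is a concatenation of two-letter words,
   so its length is even.) *)
Definition f (d i j n : nat) : nat :=
  if (i < j) && (0 < n) then (size (vrim d (nseq n (ga i)) (nseq n (ga j))))./2
  else 0.

From mathcomp Require Import all_boot zify.

(* In the descending link a_0 - a_1 - ... - a_d, the square between a_k and
   a_{k+1} is the relator a_{k+1} a_k a_{k+1}^{-1} a_0^{-1}, whose bottom word
   read from a_k to a_{k+1} is a_{k+1}^{-1} a_0.  Hence for x <= y the vertex
   rim of Fan(a_x, a_y) is a_{x+1}^{-1} a_0 ... a_y^{-1} a_0, which is encoded
   by the index list (x, y].  Since every b-letter of such a rim is a_0, the
   rim of Fan(a_i^{n+1}, a_j^{n+1}) is encoded by (i, x_1] ++ (0, x_2] ++ ...
   ++ (0, j], where x_1, ..., x_k encode the rim of Fan(a_i^n, a_j^n).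
   Splitting off the last index j + 1 of the final block (0, j + 1] gives
   X_{n+1}(i, j+1) = X_{n+1}(i, j) ++ (j+1) :: X_n(0, j+1), and the recursion
   for f is its length. *)

Local Arguments simple_vrim : simpl never.

Lemma ga_inj : injective ga. Proof. by move=> x y []. Qed.

Definition iota_oc (a b : nat) : seq nat := iota a.+1 (b - a).

Definition a0_rim (X : seq nat) : seq letter :=
  flatten [seq [:: (ga x, true); (ga 0, false)] | x <- X].

Lemma a0_rim_cat X Y : a0_rim (X ++ Y) = a0_rim X ++ a0_rim Y.
Proof. by rewrite /a0_rim map_cat flatten_cat. Qed.

Lemma size_a0_rim X : size (a0_rim X) = (size X).*2.
Proof. by elim: X => //= x X; rewrite /a0_rim /= => ->. Qed.

Section SimpleFans.

Variable d : nat.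

Lemma index_iota0 a : a <= d -> index a (iota 0 d.+1) = a.
Proof.
move=> ad; have := @index_uniq _ 0 a (iota 0 d.+1).
by rewrite size_iota nth_iota // add0n; apply=> //; apply: iota_uniq.
Qed.

Lemma index_dlink_path a : a <= d -> index (ga a) (dlink_path d) = a.+1.
Proof.
move=> ad; rewrite /dlink_path -cat1s index_cat mem_seq1 index_map ?index_iota0 //.
exact: ga_inj.
Qed.

Lemma link_path_ga a b : a <= b -> b <= d ->
  link_path d (ga a) (ga b) = map ga (iota a (b - a).+1).
Proof.
move=> ab bd; rewrite /link_path !index_dlink_path ?(leq_trans ab) //.
rewrite ltnS ab subSS /dlink_path drop_cons -map_drop drop_iota.
rewrite -map_take take_iota add0n; congr (map ga (iota a _)).
by apply/minn_idPl; lia.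
Qed.

Lemma zip_behead_ga_iota a n :
  zip (map ga (iota a n.+1)) (behead (map ga (iota a n.+1))) =
  [seq (ga k, ga k.+1) | k <- iota a n].
Proof. by elim: n a => [|n IH] a //=; move: (IH a.+1) => /= ->. Qed.

Lemma top_relator_succ k : k < d ->
  top_relator d (ga k) (ga k.+1) = Some (ga k.+1, ga k, ga 0).
Proof.
move=> kd; rewrite /top_relator /relators /= filter_map.
have -> : [seq i <- iota 0 d | preim (fun i => (ga i.+1, ga i, ga 0))
    (fun r => ((r.1.1 == ga k) && (r.1.2 == ga k.+1))
           || ((r.1.1 == ga k.+1) && (r.1.2 == ga k))) i]
    = [seq i <- iota 0 d | pred1 k i].
  by apply: eq_filter => t /=; rewrite !(inj_eq ga_inj) eqSS andbb; lia.
by rewrite filter_pred1_uniq ?iota_uniq ?mem_iota.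
Qed.

Lemma bottom_word_succ k : k < d ->
  bottom_word d (ga k) (ga k.+1) = [:: (ga k.+1, true); (ga 0, false)].
Proof. by move=> kd; rewrite /bottom_word top_relator_succ // eqxx. Qed.

Lemma simple_vrim_ga a b : a <= b -> b <= d ->
  simple_vrim d (ga a) (ga b) = a0_rim (iota_oc a b).
Proof.
move=> ab bd; rewrite /simple_vrim link_path_ga // zip_behead_ga_iota.
rewrite /a0_rim /iota_oc -map_comp -(add1n a) (iotaDl 1) -map_comp.
congr flatten; apply/eq_in_map => k; rewrite mem_iota => /andP [_ kb] /=.
by rewrite add1n bottom_word_succ //; lia.
Qed.

End SimpleFans.

(* Index list of the rim of a fan of one more level, built on the rim encoded
   by [X]; the first simple fan starts at [a_i], all later ones at [a_0]. *)
Fixpoint fan_step (i : nat) (X : seq nat) (j : nat) : seq nat :=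
  if X is x :: X' then iota_oc i x ++ fan_step 0 X' j else iota_oc i j.

Fixpoint fan_indices (n i j : nat) : seq nat :=
  if n is n'.+1 then fan_step i (fan_indices n' i j) j else [::].

Lemma fan_step_le d i X j : all (leq^~ d) X -> j <= d ->
  all (leq^~ d) (fan_step i X j).
Proof.
have iota_oc_le p q : q <= d -> all (leq^~ d) (iota_oc p q).
  by move=> qd; apply/allP => x; rewrite mem_iota; lia.
elim: X i => [|x X IH] i /=; first by move=> _; apply: iota_oc_le.
by case/andP=> xd Xd jd; rewrite all_cat iota_oc_le // IH.
Qed.

Lemma fan_indices_le d n i j : j <= d -> all (leq^~ d) (fan_indices n i j).
Proof. by move=> jd; elim: n => //= n IH; apply: fan_step_le. Qed.

Lemma head_fan_step X i j : i < j -> i < head j X -> head j (fan_step i X j) = i.+1.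
Proof.
case: X => [|x X] /= ij ix; rewrite /iota_oc.
  by case: (j - i) (subn_gt0 i j) => [|m]; rewrite ij.
by case: (x - i) (subn_gt0 i x) => [|m]; rewrite ix.
Qed.

Lemma fan_indices_diag n i : fan_indices n i i = [::].
Proof. by elim: n => //= n ->; rewrite /= /iota_oc subnn. Qed.

Lemma head_fan_indices n i j : i < j -> i < head j (fan_indices n i j).
Proof. by move=> ij; elim: n => //= n IH; rewrite head_fan_step. Qed.

Lemma vrim_fan_step d i X j : all (leq^~ d) X -> j <= d -> i <= head j X ->
  flatten [seq simple_vrim d x.1 x.2
          | x <- pairup (ga i :: rcons (map fst (a0_rim X)) (ga j))]
  = a0_rim (fan_step i X j).
Proof.
elim: X i => [|x X IH] i /=; first by move=> _ jd ij; rewrite cats0 simple_vrim_ga.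
case/andP=> xd Xd jd ix.
by rewrite /a0_rim /= -/(a0_rim X) IH // simple_vrim_ga // -a0_rim_cat.
Qed.

Lemma vrim_cons d a b u v : size u = size v ->
  vrim d (a :: u) (b :: v) =
  flatten [seq simple_vrim d x.1 x.2
          | x <- pairup (a :: rcons (map fst (vrim d u v)) b)].
Proof. by case: u v => [|x u] [|y v] //= _; rewrite cats0. Qed.

Lemma vrim_nseq d n i j : i <= j -> j <= d ->
  vrim d (nseq n (ga i)) (nseq n (ga j)) = a0_rim (fan_indices n i j).
Proof.
move=> ij jd; elim: n => [|n IH] //.
rewrite [nseq n.+1 _]/= [nseq n.+1 _]/= vrim_cons ?size_nseq // IH /=.
apply: vrim_fan_step => //; first exact: fan_indices_le.
case: (ltngtP i j) ij => // [lt_ij|->] _; last by rewrite fan_indices_diag.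
by apply/ltnW/head_fan_indices.
Qed.

Lemma f_fan_indices d i j n : i <= j -> j <= d -> f d i j n = size (fan_indices n i j).
Proof.
move=> ij jd; rewrite /f; case: ifP => [/andP [lt_ij _]|].
  by rewrite vrim_nseq // size_a0_rim half_double.
case: (ltngtP i j) ij => // [_ _|-> _]; last by rewrite fan_indices_diag.
by case: n.
Qed.

Lemma fan_step_cat i X x Y k :
  fan_step i (X ++ x :: Y) k = fan_step i X x ++ fan_step 0 Y k.
Proof. by elim: X i => [|y X IH] i //=; rewrite IH catA. Qed.

Lemma fan_step_rcons i X j : i <= j -> fan_step i X j.+1 = rcons (fan_step i X j) j.+1.
Proof.
elim: X i => [|x X IH] i /=; last by move=> _; rewrite IH // rcons_cat.
by move=> ij; rewrite /iota_oc subSn // -[(j - i).+1]addn1 iotaD addSn subnKC // cats1.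
Qed.

Lemma fan_indices_succ n i j : i <= j ->
  fan_indices n.+1 i j.+1 = fan_indices n.+1 i j ++ j.+1 :: fan_indices n 0 j.+1.
Proof.
move=> ij; elim: n => [|n IH]; first by rewrite cats1 -(@fan_step_rcons i [::] j ij).
rewrite -[fan_indices n.+2 i j.+1]/(fan_step i (fan_indices n.+1 i j.+1) j.+1).
by rewrite IH fan_step_cat fan_step_rcons // cat_rcons.
Qed.

Theorem mainTheorem4 (d : nat) (hd : 1 <= d) (n i j : nat) :
  1 <= n -> i < j -> j <= d ->
  f d i j n = f d i j.-1 n + f d 0 j n.-1 + 1.
Proof.
case: n => // n _; case: j => // j le_ij jd /=.
rewrite !f_fan_indices ?leqW ?(ltnW jd) // fan_indices_succ // size_cat /=.
by rewrite addnS addn1.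
Qed.
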